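(* Let $G$ be a finite group with $Z(G)=I$, and suppose there is an integer $n_0\ge 3$ such that $l^i(D_1,\dots,D_n)\ge1$ for all class vectors $(D_1,\dots,D_n)$ of $G$ of length $n\in\{n_0,n_0+1,\dots,2n_0-1\}$. Then $$l^i(C_1,\dots,C_m)\ge |G|^{k-1}$$ for every class vector $(C_1,\dots,C_m)$ of $G$ of length $m=k\cdot n_0+l$ with $l\in\{0,1,\dots,n_0-1\}$ and $k\ge2$.
   Context: $I$ is the trivial group and $\iota$ the identity. A class vector of length $k$ is a tuple of $k$ non-trivial conjugacy classes. $\Sigma^i(C_1,\dots,C_k)$ is the set of $G$-conjugacy classes (simultaneous conjugation) of tuples $(\sigma_1,\dots,\sigma_k)$ with $\sigma_j\in C_j$, $\langle\sigma_1,\dots,\sigma_k\rangle=G$, $\sigma_1\cdots\sigma_k=\iota$, and $l^i(C_1,\dots,C_k)=|\Sigma^i(C_1,\dots,C_k)|$. *)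

From mathcomp Require Import all_boot all_fingroup all_solvable.
Set Implicit Arguments. Unset Strict Implicit. Unset Printing Implicit Defensive.
Local Open Scope group_scope.

Definition class_vector (gT : finGroupType) (G : {group gT}) (k : nat)
  (C : 'I_k -> {set gT}) : Prop :=
  forall j, C j \in classes G /\ C j != [1 gT].

Definition Sigma_tuples (gT : finGroupType) (G : {group gT}) (k : nat)
  (C : 'I_k -> {set gT}) : {set {ffun 'I_k -> gT}} :=
  [set s : {ffun 'I_k -> gT} |
     [&& [forall j, s j \in C j],
         <<[set s j | j : 'I_k]>> == G &
         \prod_(j < k) s j == 1]].

Definition tuple_conj (gT : finGroupType) (k : nat) (s : {ffun 'I_k -> gT})
  (g : gT) : {ffun 'I_k -> gT} := [ffun j => s j ^ g].

Definition Sigma_i (gT : finGroupType) (G : {group gT}) (k : nat)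
  (C : 'I_k -> {set gT}) : {set {set {ffun 'I_k -> gT}}} :=
  [set [set tuple_conj s g | g in G] | s in Sigma_tuples G C].

Definition l_i (gT : finGroupType) (G : {group gT}) (k : nat)
  (C : 'I_k -> {set gT}) : nat := #|Sigma_i G C|.

From mathcomp Require Import all_boot all_fingroup all_solvable zify.
Set Implicit Arguments. Unset Strict Implicit. Unset Printing Implicit Defensive.
Local Open Scope group_scope.

(* Since Z(G) = 1, only the identity centralises a generating tuple, so every
   orbit of simultaneous conjugation on generating tuples has exactly #|G|
   elements: l^i(C) >= 1 forces at least #|G| tuples, and #|G|^j tuples force
   l^i(C) >= #|G|^(j-1).  Concatenating two generating tuples with product 1
   gives a generating tuple with product 1 for the concatenated class vector,
   so tuple counts are supermultiplicative.  Cutting a class vector of length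
   k n0 + l into k - 1 blocks of length n0 and one block of length n0 + l, each
   with l^i >= 1 by hypothesis, yields at least #|G|^k tuples. *)

Section FfunCat.
Variables (T : Type) (n1 n2 : nat).

Definition ffun_cat (s1 : {ffun 'I_n1 -> T}) (s2 : {ffun 'I_n2 -> T}) :
    {ffun 'I_(n1 + n2) -> T} :=
  [ffun i => match split i with inl a => s1 a | inr b => s2 b end].

Lemma ffun_cat_lshift s1 s2 a : ffun_cat s1 s2 (lshift n2 a) = s1 a.
Proof. by rewrite ffunE (unsplitK (inl _ a)). Qed.

Lemma ffun_cat_rshift s1 s2 b : ffun_cat s1 s2 (rshift n1 b) = s2 b.
Proof. by rewrite ffunE (unsplitK (inr _ b)). Qed.

Lemma ffun_cat_inj :
  injective (fun p : {ffun 'I_n1 -> T} * {ffun 'I_n2 -> T} => ffun_cat p.1 p.2).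
Proof.
move=> [s1 s2] [t1 t2] /= eq_st; congr pair; apply/ffunP => i.
  by rewrite -(ffun_cat_lshift s1 s2) eq_st ffun_cat_lshift.
by rewrite -(ffun_cat_rshift s1 s2) eq_st ffun_cat_rshift.
Qed.

End FfunCat.

Section SigmaTuples.
Variables (gT : finGroupType) (G : {group gT}).

Lemma classes_subG C : C \in classes G -> C \subset G.
Proof. by case/imsetP=> x xG ->; apply: class_subG. Qed.

Lemma memJ_classes C x g : C \in classes G -> x \in C -> g \in G -> x ^ g \in C.
Proof. by case/imsetP=> y _ -> /class_eqP <- gG; apply: memJ_class. Qed.

Lemma Sigma_tuples_cat n1 n2 (C : 'I_(n1 + n2) -> {set gT}) s1 s2 :
    (forall j, C j \subset G) ->
    s1 \in Sigma_tuples G (fun a => C (lshift n2 a)) ->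
    s2 \in Sigma_tuples G (fun b => C (rshift n1 b)) ->
  ffun_cat s1 s2 \in Sigma_tuples G C.
Proof.
move=> CG; rewrite !inE => /and3P[/forallP s1C /eqP gen_s1 /eqP prod_s1].
move=> /and3P[/forallP s2C /eqP _ /eqP prod_s2].
have sC j : ffun_cat s1 s2 j \in C j.
  rewrite -(splitK j); case: (split j) => [a|b] /=.
    by rewrite ffun_cat_lshift.
  by rewrite ffun_cat_rshift.
apply/and3P; split; first exact/forallP.
- rewrite eqEsubset gen_subG; apply/andP; split.
    by apply/subsetP=> _ /imsetP[j _ ->]; apply: subsetP (CG j) _ (sC j).
  rewrite -{1}gen_s1 genS //; apply/subsetP=> _ /imsetP[a _ ->].
  by rewrite -(ffun_cat_lshift s1 s2) imset_f.
- rewrite big_split_ord /=.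
  under eq_bigr do rewrite ffun_cat_lshift.
  under [X in _ * X]eq_bigr do rewrite ffun_cat_rshift.
  by rewrite prod_s1 prod_s2 mulg1.
Qed.

Lemma card_Sigma_tuples_cat n1 n2 (C : 'I_(n1 + n2) -> {set gT}) :
    (forall j, C j \subset G) ->
  #|Sigma_tuples G (fun a => C (lshift n2 a))| *
  #|Sigma_tuples G (fun b => C (rshift n1 b))| <= #|Sigma_tuples G C|.
Proof.
move=> CG; rewrite -cardsX -(card_imset _ (@ffun_cat_inj gT n1 n2)).
apply/subset_leq_card/subsetP=> _ /imsetP[[s1 s2] /setXP[s1S s2S] ->].
exact: Sigma_tuples_cat.
Qed.

Lemma Sigma_tuples_conj k (C : 'I_k -> {set gT}) s g :
    (forall j, C j \in classes G) ->
  s \in Sigma_tuples G C -> g \in G -> tuple_conj s g \in Sigma_tuples G C.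
Proof.
move=> CG; rewrite !inE => /and3P[/forallP sC /eqP gen_s /eqP prod_s] gG.
apply/and3P; split.
- by apply/forallP=> j; rewrite ffunE memJ_classes.
- suff -> : [set tuple_conj s g j | j : 'I_k] = [set s j | j : 'I_k] :^ g.
    by rewrite genJ gen_s conjGid.
  by rewrite /conjugate -imset_comp; apply: eq_imset => j; rewrite /= ffunE.
- suff -> : \prod_(j < k) tuple_conj s g j = (\prod_(j < k) s j) ^ g.
    by rewrite prod_s conj1g.
  rewrite (big_morph (conjg^~ g) (fun x y => conjMg x y g) (conj1g g)).
  by apply: eq_bigr => j _; rewrite ffunE.
Qed.

Lemma card_Sigma_tuples_le k (C : 'I_k -> {set gT}) :
  #|Sigma_tuples G C| <= l_i G C * #|G|.
Proof.
apply: (@leq_trans #|cover (Sigma_i G C)|).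
  apply/subset_leq_card/subsetP=> s sS; apply/bigcupP.
  exists [set tuple_conj s g | g in G]; first exact: imset_f.
  by apply/imsetP; exists 1 => //; apply/ffunP=> j; rewrite ffunE conjg1.
apply: leq_trans (leq_card_cover _).1 _.
rewrite /l_i -sum_nat_const; apply: leq_sum => _ /imsetP[s _ ->].
exact: leq_imset_card.
Qed.

Hypothesis ZG1 : 'Z(G) = 1.

Lemma tuple_conj_inj k (s : {ffun 'I_k -> gT}) :
  <<[set s j | j : 'I_k]>> = G -> {in G &, injective (tuple_conj s)}.
Proof.
move=> gen_s g h gG hG /ffunP eq_gh.
have : g * h^-1 \in 'C([set s j | j : 'I_k]).
  apply/centP=> _ /imsetP[j _ ->]; apply/commute_sym/commgP/conjg_fixP.
  by move: (eq_gh j); rewrite !ffunE conjgM => ->; rewrite conjgK.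
rewrite -cent_gen gen_s => cGgh.
have : g * h^-1 \in 'Z(G) by rewrite inE groupM ?groupV.
by rewrite ZG1 => /set1P/eqP; rewrite mulg_eq1 invgK => /eqP.
Qed.

Lemma card_Sigma_tuples_ge k (C : 'I_k -> {set gT}) :
    (forall j, C j \in classes G) ->
  0 < l_i G C -> #|G| <= #|Sigma_tuples G C|.
Proof.
move=> CG; rewrite lt0n cards_eq0 => /set0Pn[_ /imsetP[s sS _]].
have gen_s : <<[set s j | j : 'I_k]>> = G.
  by move: sS; rewrite inE => /and3P[_ /eqP].
rewrite -(card_in_imset (tuple_conj_inj gen_s)).
apply/subset_leq_card/subsetP=> _ /imsetP[g gG ->].
exact: Sigma_tuples_conj.
Qed.

Variable n0 : nat.
Hypothesis l_i_gt0 : forall n (D : 'I_n -> {set gT}),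
  n0 <= n <= 2 * n0 - 1 -> class_vector G D -> 1 <= l_i G D.

Lemma card_Sigma_tuples_block m (C : 'I_m -> {set gT}) :
  n0 <= m < 2 * n0 -> class_vector G C -> #|G| <= #|Sigma_tuples G C|.
Proof.
move=> bounds_m CC; apply: card_Sigma_tuples_ge; first by move=> j; case: (CC j).
by apply: l_i_gt0 CC; lia.
Qed.

Lemma card_Sigma_tuples_ge_expn k m (C : 'I_m -> {set gT}) :
    k.+1 * n0 <= m < k.+2 * n0 -> class_vector G C ->
  #|G| ^ k.+1 <= #|Sigma_tuples G C|.
Proof.
elim: k m C => [|k IHk] m C bounds_m CC.
  by rewrite expn1; apply: card_Sigma_tuples_block => //; lia.
move Em': (m - n0) => m'; have {}Em' : m = n0 + m' by lia.
subst m; rewrite expnS.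
apply: leq_trans (leq_mul _ _) (card_Sigma_tuples_cat _).
- by apply: card_Sigma_tuples_block => [|j]; [lia | apply: CC].
- by apply: IHk => [|j]; [lia | apply: CC].
- by move=> j; case: (CC j) => /classes_subG.
Qed.

End SigmaTuples.

Theorem proposition13 (gT : finGroupType) (G : {group gT}) (n0 : nat) :
  'Z(G) = 1 ->
  (3 <= n0)%N ->
  (forall (n : nat) (D : 'I_n -> {set gT}),
      (n0 <= n <= 2 * n0 - 1)%N -> class_vector G D -> (1 <= l_i G D)%N) ->
  forall (k l : nat) (C : 'I_(k * n0 + l) -> {set gT}),
    (l <= n0 - 1)%N -> (2 <= k)%N -> class_vector G C ->
    (#|G| ^ (k - 1) <= l_i G C)%N.
Proof.
move=> ZG1 n0_ge3 l_i_gt0 [|[|k]] // l C l_le _ CC.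
rewrite subn1 -(@leq_pmul2r #|G|) ?cardG_gt0 // -expnSr.
apply: leq_trans (card_Sigma_tuples_ge_expn ZG1 l_i_gt0 _ CC) _.
- nia.
- exact: card_Sigma_tuples_le.
Qed.
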